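(* Let $n$ be an odd positive integer and $q$ an odd prime power. Then the group $\Gamma L_1(1,q^n)=\Gamma L(1,q^n)\cap SL(n,q)$ does not act transitively on $\mathbb{F}_{q^n}\setminus\{0\}$.
   Context: Regard $\mathbb{F}_{q^n}$ as an $n$-dimensional $\mathbb{F}_q$-vector space, so $GL(n,q)=GL_{\mathbb{F}_q}(\mathbb{F}_{q^n})$. Let $\alpha$ generate $\mathbb{F}_{q^n}^*$, let $\tau(z)=\alpha z$ and $\sigma(z)=z^q$. $\Gamma L(1,q^n)$ is the subgroup of $GL(n,q)$ generated by $\tau$ and $\sigma$ (of order $n(q^n-1)$), and $\Gamma L_1(1,q^n)$ is its intersection with $SL(n,q)$. *)

From HB Require Import structures.
From mathcomp Require Import all_boot all_order all_algebra all_field.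
Set Implicit Arguments. Unset Strict Implicit. Unset Printing Implicit Defensive.
Import GRing.Theory.
Local Open Scope ring_scope.

(* Setting: F = F_q a finite field, L = F_{q^n} a finite-dimensional field
   extension of F, viewed as an F-vector space of dimension n = \dim {:L}. *)

Section GammaL.
Variables (F : finFieldType) (L : fieldExtType F).

Definition lin_det (f : L -> L) : F :=
  \det (\matrix_(i, j) coord (vbasis {:L}) j (f (tnth (vbasis {:L}) i))).

Definition tau_map (alpha : L) : L -> L := fun z => alpha * z.
Definition sigma_map : L -> L := fun z => z ^+ #|F|.

(* Gamma L(1,q^n): the group generated by tau and sigma (a finite group of
   bijections, so the monoid they generate is the group they generate);
   membership is up to extensional equality of maps. *)
Inductive in_GammaL (alpha : L) : (L -> L) -> Prop :=
  | GL_id : in_GammaL alpha id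
  | GL_tau g : in_GammaL alpha g -> in_GammaL alpha (tau_map alpha \o g)
  | GL_sigma g : in_GammaL alpha g -> in_GammaL alpha (sigma_map \o g)
  | GL_ext g h : in_GammaL alpha g -> (forall z, g z = h z) -> in_GammaL alpha h.

Definition in_GammaL1 (alpha : L) (g : L -> L) : Prop :=
  in_GammaL alpha g /\ lin_det g = 1.

End GammaL.

From HB Require Import structures.
From mathcomp Require Import all_boot all_order all_algebra all_field.
Import GRing.Theory.
Local Open Scope ring_scope.
Set Implicit Arguments. Unset Strict Implicit. Unset Printing Implicit Defensive.

(* Every element of Gamma L(1,q^n) is z |-> alpha^k z^(q^j), the composite of
   multiplication by alpha^k with the j-th power of the Frobenius sigma, so
   its F_q-determinant is det(sigma)^j * det(alpha^k .).  If Gamma L_1 were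
   transitive on L^*, such a map of determinant 1 would send 1 to a non-square
   c of F_q^* (one exists since q is odd); then alpha^k = c and
   1 = c^n det(sigma)^j.  As sigma^n = 1, also det(sigma)^(jn) = 1, and since n
   is odd this makes c = (c det(sigma)^j)^(n+1) a square in F_q. *)

Lemma square_of_odd_power (R : comPzRingType) n (c s : R) :
  odd n -> s ^+ n = 1 -> c ^+ n * s = 1 -> exists d, d * d = c.
Proof.
move=> odd_n sn1 cns1; exists ((c * s) ^+ n.+1./2); rewrite -exprD.
have -> : (n.+1./2 + n.+1./2 = n.+1)%N.
  by rewrite addnn -[RHS]odd_double_half /= odd_n.
by rewrite exprMn exprS exprSr [_ * s]mulrC mulrA -(mulrA c) cns1 sn1 !mulr1.
Qed.

Lemma two_neq0_odd_card (F : finFieldType) : odd #|F| -> 2%:R != 0 :> F.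
Proof.
move=> oddF; apply/negP => /eqP two0.
have pch2 : 2%N \in [pchar F] by rewrite inE two0 eqxx.
have := finNzRing_gt1 F; move: oddF.
by rewrite (card_pprimeChar pch2) oddX orbF => /eqP ->.
Qed.

Lemma odd_card_nonsquare (F : finFieldType) :
  odd #|F| -> exists c : F, forall d, d * d != c.
Proof.
move=> oddF; pose sq (d : F) := d * d.
have [c /forallP c_nonsq | all_sq] := pickP [pred c | [forall d, sq d != c]].
  by exists c.
have sq_not_inj : ~~ injectiveb sq.
  apply/injectivePn; exists 1, (-1); last by rewrite /sq mulrNN.
  by rewrite -subr_eq0 opprK -mulr2n two_neq0_odd_card.
have sq_onto c : c \in codom sq.
  by have /negbT/forallPn[d /negbNE/eqP <-] := all_sq c; apply: codom_f.
case/negP: sq_not_inj; apply/dinjectiveP/image_injP.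
by rewrite (eq_cardT sq_onto) cardT.
Qed.

Section GammaL.
Variables (F : finFieldType) (L : fieldExtType F).
Implicit Types (f g : L -> L) (a : L).
Local Notation sigma := (@sigma_map F L).

Lemma lin_det_ext f g : f =1 g -> lin_det f = lin_det g.
Proof. by move=> fg; congr (\det _); apply/matrixP => i j; rewrite !mxE fg. Qed.

Lemma lin_det_comp f g : linear f -> lin_det (f \o g) = lin_det g * lin_det f.
Proof.
move=> /(GRing.isLinear.Build F L L *:%R f) fL.
pose f' : {linear L -> L} := HB.pack f fL.
rewrite /lin_det -det_mulmx; congr (\det _); apply/matrixP => i k.
rewrite !mxE /= [g _](coord_vbasis (memvf _)) -[f]/(f' : L -> L) !linear_sum.
by apply: eq_bigr => j _; rewrite !mxE !linearZ /= !(tnth_nth 0).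
Qed.

Lemma lin_det_scalar (c : F) : lin_det (tau_map (c%:A : L)) = c ^+ \dim {:L}.
Proof.
rewrite -det_scalar; congr (\det _); apply/matrixP => i j.
rewrite !mxE /tau_map mulr_algl linearZ /= (tnth_nth 0).
by rewrite coord_free ?(basis_free (vbasisP _)) // eq_sym mulr_natr.
Qed.

Lemma lin_det_id : lin_det (@id L) = 1.
Proof.
rewrite -(expr1n _ (\dim {:L})) -lin_det_scalar.
by apply: lin_det_ext => z; rewrite /tau_map scale1r mul1r.
Qed.

Lemma lin_det_iter f j : linear f -> lin_det (iter j f) = lin_det f ^+ j.
Proof.
move=> lf; elim: j => [|j IHj]; first exact: lin_det_id.
by rewrite exprSr -IHj -lin_det_comp //; apply: lin_det_ext => z; rewrite iterS.
Qed.

Lemma tau_map_linear a : linear (tau_map a).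
Proof. by move=> b u v; rewrite /tau_map mulrDr scalerAr. Qed.

Lemma sigma_map_linear : linear sigma.
Proof.
have [p _ pchFp] := finPcharP F.
have q_pchar : [pchar L].-nat #|F|.
  rewrite (eq_pnat _ (pchar_lalg L)) (eq_pnat _ (pcharf_eq pchFp)).
  by rewrite (card_pprimeChar pchFp) pnatX pnat_id ?(pcharf_prime pchFp).
by move=> a u v; rewrite /sigma_map exprDn_pchar // exprZn expf_card.
Qed.

Lemma iter_sigma_mapE j z : iter j sigma z = z ^+ (#|F| ^ j).
Proof. by elim: j => [|j IHj]; rewrite ?expr1 //= IHj /sigma_map expnSr exprM. Qed.

Lemma iter_sigma_map_dim : iter (\dim {:L}) sigma =1 id.
Proof.
move=> z; apply/eqP; rewrite iter_sigma_mapE.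
by rewrite -(Fermat's_little_theorem {:L}%AS) memvf.
Qed.

Lemma in_GammaL_normal_form alpha g :
  in_GammaL alpha g -> exists k j, g =1 tau_map (alpha ^+ k) \o iter j sigma.
Proof.
elim=> [|h _ [k [j Dh]]|h _ [k [j Dh]]|h h' _ [k [j Dh]] hh'].
- by exists 0%N, 0%N => z; rewrite /tau_map /= mul1r.
- by exists k.+1, j => z; rewrite /= Dh /tau_map exprS mulrA.
- exists (k * #|F|)%N, j.+1 => z.
  by rewrite /= Dh /sigma_map /tau_map exprMn exprM.
- by exists k, j => z; rewrite -hh' Dh.
Qed.

Lemma lin_det_normal_form a j :
  lin_det (tau_map a \o iter j sigma) = lin_det sigma ^+ j * lin_det (tau_map a).
Proof.
by rewrite (lin_det_comp _ (tau_map_linear a)) (lin_det_iter _ sigma_map_linear).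
Qed.

Lemma lin_det_sigma_map_exp_dim : lin_det sigma ^+ \dim {:L} = 1.
Proof.
rewrite -(lin_det_iter _ sigma_map_linear).
by rewrite (lin_det_ext iter_sigma_map_dim) lin_det_id.
Qed.

End GammaL.

Theorem lemma3p2 (F : finFieldType) (L : fieldExtType F) (alpha : L)
  (Hq : odd #|F|) (Hn : odd (\dim {:L}))
  (Halpha : ((#|F| ^ \dim {:L}).-1).-primitive_root alpha) :
  ~ (forall x y : L, x != 0 -> y != 0 ->
       exists g : L -> L, in_GammaL1 alpha g /\ g x = y).
Proof.
move=> transitive; have [c c_nonsq] := odd_card_nonsquare Hq.
have cA_neq0 : c%:A != 0 :> L.
  rewrite scaler_eq0 oner_eq0 orbF.
  by apply: contraNneq (c_nonsq 0) => ->; rewrite mulr0.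
have [g [[/in_GammaL_normal_form [k [j Dg]] det_g] g1]] :=
  transitive 1 c%:A (oner_neq0 _) cA_neq0.
have alpha_k : alpha ^+ k = c%:A.
  by rewrite -g1 Dg /= iter_sigma_mapE expr1n /tau_map mulr1.
have det_sigma_j : (lin_det (@sigma_map F L) ^+ j) ^+ \dim {:L} = 1.
  by rewrite -exprM mulnC exprM lin_det_sigma_map_exp_dim expr1n.
have : c ^+ \dim {:L} * lin_det (@sigma_map F L) ^+ j = 1.
  rewrite -det_g (lin_det_ext Dg) lin_det_normal_form alpha_k.
  by rewrite lin_det_scalar mulrC.
by case/(square_of_odd_power Hn det_sigma_j) => d /eqP; apply/negP.
Qed.
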